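(* Let $\Gamma$ be an $N_{\mathbb R}$-parameterized tropical curve, let $\Gamma_0\subset\Gamma$ be the maximal subgraph with $V(\Gamma_0)=V^f(\Gamma)$ whose edges are bounded edges with trivial slope ($N_e=0$), and let $\overline\Gamma=\Gamma/\Gamma_0$ be obtained by contracting each connected component of $\Gamma_0$ to a vertex (with $h_{\overline\Gamma}$ equal to the common value of $h_\Gamma$ on that component, and unchanged elsewhere; this is an $N_{\mathbb R}$-parameterized tropical curve with $g(\overline\Gamma)\le g(\Gamma)$). Fix an orientation of $\Gamma$ and the induced one on $\overline\Gamma$. Then for every abelian group $G$ the natural map $\mathbb E^1_G(\overline\Gamma)\to\mathbb E^1_G(\Gamma)$ (diagonal on vertices, inclusion on edges) is an isomorphism, and there is an exact sequence $$0\to\mathbb E^2_G(\overline\Gamma)\to\mathbb E^2_G(\Gamma)\to N_G^{\,g(\Gamma)-g(\overline\Gamma)}\to0.$$ The same holds with $\mathbb E^\bullet$ replaced by $\mathcal E^\bullet$.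
   Context: $N$ a lattice, $N_G=N\otimes G$. An $N_{\mathbb R}$-parameterized tropical curve: tropical curve $\Gamma$ (finite connected metric graph; finite vertices $V^f$; ordered infinite vertices of valency one joined to finite vertices by unbounded edges of length $\infty$; bounded edges $E^b$ with lengths $|e|>0$) with $h_\Gamma:V(\Gamma)\to N_{\mathbb R}$, $h_\Gamma(v)\in N$ for infinite $v$, $\frac1{|e|}(h_\Gamma(v)-h_\Gamma(v'))\in N$ for bounded $e$ joining $v,v'$, balancing $\sum_{v'\in V^f,e\in E_{vv'}}\frac1{|e|}(h_\Gamma(v')-h_\Gamma(v))+\sum_{v'\in V^\infty,e\in E_{vv'}}h_\Gamma(v')=0$ at each finite $v$. Genus $g(\Gamma)=1-|V(\Gamma)|+|E(\Gamma)|$. Slope $N_e=N\cap\mathbb R(h_\Gamma(v)-h_\Gamma(v'))$ of bounded $e$; multiplicity $l(e)$ = integral length of $\frac1{|e|}(h_\Gamma(v)-h_\Gamma(v'))$. Complexes: with $\epsilon(e,v)=-1,1,0$ if $v$ is initial point, target, neither, define $b_G,\beta_G:\big(\bigoplus_{v\in V^f}N_G\big)\oplus\big(\bigoplus_{e\in E^b}(N_e)_G\big)\to\bigoplus_{e\in E^b}N_G$ by $x_v\mapsto(\epsilon(e,v)x_v)_e$, $x_e\mapsto x_e$ resp. $x_e\mapsto l(e)x_e$; $\mathbb E^1_G,\mathbb E^2_G$ kernel and cokernel of $b_G$, $\mathcal E^1_G,\mathcal E^2_G$ of $\beta_G$. *)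

From HB Require Import structures.
From mathcomp Require Import all_boot all_order all_algebra.
Set Implicit Arguments. Unset Strict Implicit. Unset Printing Implicit Defensive.
Import Order.TTheory GRing.Theory Num.Theory.
Local Open Scope ring_scope.

(* The lattice N is Z^n (row vectors 'rV[int]_n), N_R = R^n ('rV[R]_n) for an
   archimedean real field R (e.g. the reals), N_G = N (x) G = 'rV[G]_n. *)

(* Combinatorial data of an oriented N_R-parameterized tropical curve:
   finite vertices Vf, infinite vertices Vi (each joined by one unbounded
   edge to the finite vertex att w), bounded edges Eb oriented from src to
   tgt, lengths len, and the parameterization hf (finite vertices),
   hi (infinite vertices, values in N). *)
Record curve (R : archiRealFieldType) (n : nat) := Curve {
  Vf : finType; Vi : finType; Eb : finType;
  src : Eb -> Vf; tgt : Eb -> Vf; att : Vi -> Vf;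
  len : Eb -> R;
  hf : Vf -> 'rV[R]_n;
  hi : Vi -> 'rV[int]_n }.
Arguments Vf {R n} c.
Arguments Vi {R n} c.
Arguments Eb {R n} c.
Arguments src {R n c}.
Arguments tgt {R n c}.
Arguments att {R n c}.
Arguments len {R n c}.
Arguments hf {R n c}.
Arguments hi {R n c}.

Section Curves.
Variables (R : archiRealFieldType) (n : nat).
Implicit Types (C : curve R n).

Definition intv (k : 'rV[int]_n) : 'rV[R]_n := map_mx (fun z : int => z%:~R) k.

Definition adj C : rel (Vf C) := fun x y =>
  [exists e : Eb C, ((src e == x) && (tgt e == y)) || ((src e == y) && (tgt e == x))].

Definition is_curve C : Prop :=
  [/\ (forall e : Eb C, 0 < len e),
      (forall e : Eb C, exists k : 'rV[int]_n,
          (len e)^-1 *: (hf (tgt e) - hf (src e)) = intv k),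
      (forall v : Vf C,
          \sum_(e : Eb C | src e == v) (len e)^-1 *: (hf (tgt e) - hf v)
        + \sum_(e : Eb C | tgt e == v) (len e)^-1 *: (hf (src e) - hf v)
        + \sum_(w : Vi C | att w == v) intv (hi w) = 0)
    & (forall x y : Vf C, connect (@adj C) x y)].

(* genus g = 1 - |V| + |E|, V = Vf + Vi, E = Eb + unbounded edges (one per Vi) *)
Definition genus C : int :=
  1 - (#|Vf C| + #|Vi C|)%N%:Z + (#|Eb C| + #|Vi C|)%N%:Z.

Definition inNe C (e : Eb C) (k : 'rV[int]_n) : Prop :=
  exists r : R, intv k = r *: (hf (src e) - hf (tgt e)).

Definition lmult C (e : Eb C) : nat :=
  \big[gcdn/0%N]_(i < n)
     `|Num.floor ((len e)^-1 * (hf (tgt e) ord0 i - hf (src e) ord0 i))|%N.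

Definition trivslope C (e : Eb C) : bool := hf (src e) == hf (tgt e).

Definition adj0 C : rel (Vf C) := fun x y =>
  [exists e : Eb C, trivslope e &&
     (((src e == x) && (tgt e == y)) || ((src e == y) && (tgt e == x)))].

Lemma adj0_sym C : symmetric (@adj0 C).
Proof.
move=> x y; apply/existsP/existsP => -[e He]; exists e;
  by move: He; rewrite orbC.
Qed.

Lemma root0_root C (v : Vf C) : fingraph.root (@adj0 C) (fingraph.root (@adj0 C) v) == fingraph.root (@adj0 C) v.
Proof. by rewrite root_root //; apply: sym_connect_sym; apply: adj0_sym. Qed.

(* vertices of Gamma/Gamma_0 : one representative (root) per connected
   component of Gamma_0 *)
Definition Vbar C := {v : Vf C | fingraph.root (@adj0 C) v == v}.
Definition piv C (v : Vf C) : Vbar C := exist _ (fingraph.root (@adj0 C) v) (root0_root v).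
(* bounded edges of Gamma/Gamma_0 : edges of Gamma not in Gamma_0 *)
Definition Ebar C := {e : Eb C | ~~ trivslope e}.

Definition contract C : curve R n :=
  @Curve R n (Vbar C) (Vi C) (Ebar C)
    (fun e => piv (src (val e))) (fun e => piv (tgt (val e)))
    (fun w => piv (att w))
    (fun e => len (val e))
    (fun w => hf (val w))
    (@hi _ _ C).

Variable G : zmodType.
Notation NG := 'rV[G]_n.

Definition tens (k : 'rV[int]_n) (g : G) : NG := \row_i (g *~ k ord0 i).

(* (N_e)_G, viewed as its image in N_G (N_e is saturated in N, hence a direct
   summand, so N_e (x) G -> N (x) G is injective): sums of k (x) g, k in N_e *)
Definition inNeG C (e : Eb C) (y : NG) : Prop :=
  exists s : seq ('rV[int]_n * G),
    (forall p, p \in s -> inNe e p.1) /\ y = \sum_(p <- s) tens p.1 p.2.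

(* b_G (beta = false) and beta_G (beta = true) *)
Definition dmap (beta : bool) C (xv : {ffun Vf C -> NG}) (xe : {ffun Eb C -> NG})
  : {ffun Eb C -> NG} :=
  [ffun e => xv (tgt e) - xv (src e) + xe e *+ (if beta then lmult e else 1%N)].

(* (xv, xe) lies in the domain and in the kernel: an element of E^1 / cal E^1 *)
Definition inE1 (beta : bool) C (xv : {ffun Vf C -> NG}) (xe : {ffun Eb C -> NG}) :=
  (forall e, inNeG e (xe e)) /\ dmap beta xv xe = 0.

(* z lies in the image of b_G / beta_G (E^2 = cokernel = C1 / image) *)
Definition inIm (beta : bool) C (z : {ffun Eb C -> NG}) :=
  exists (xv : {ffun Vf C -> NG}) (xe : {ffun Eb C -> NG}),
    (forall e, inNeG e (xe e)) /\ dmap beta xv xe = z.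

Definition liftV C (xv : {ffun Vf (contract C) -> NG}) : {ffun Vf C -> NG} :=
  [ffun v => xv (piv v)].
Definition liftE C (xe : {ffun Eb (contract C) -> NG}) : {ffun Eb C -> NG} :=
  [ffun e => if @insub _ (fun e => ~~ trivslope e) (Ebar C) e is Some e' then xe e' else 0].

End Curves.

Arguments inE1 {R n} G beta {C} xv xe.
Arguments inIm {R n} G beta {C} z.

(* On an edge e of trivial slope N_e = 0, so admissible edge values vanish
   there and both differentials reduce to the coboundary x(tgt e) - x(src e).
   Hence elements of E^1 are constant on the components of Gamma_0 and descend
   to the contraction, while E^2 modulo the image of E^2(contraction) is the
   cokernel of the coboundary N_G^V -> N_G^(E_0), i.e. H^1(Gamma_0; N_G).
   Adding the edges of Gamma_0 one at a time, an edge closing a cycle adds one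
   free coordinate to H^1 (the defect of the current potential along it), and a
   bridge merges two components, its defect being absorbed by shifting the
   potential on one side.  So H^1(Gamma_0; N_G) = N_G^b with
   b = |E_0| - |V| + #components = g(Gamma) - g(contraction). *)

From mathcomp Require Import all_boot all_order all_algebra zify.
Set Implicit Arguments. Unset Strict Implicit. Unset Printing Implicit Defensive.
Import GRing.Theory Num.Theory.
Local Open Scope ring_scope.

Lemma setU1_ind (T : finType) (P : {set T} -> Prop) :
  P set0 -> (forall x (A : {set T}), x \notin A -> P A -> P (x |: A)) -> forall A, P A.
Proof.
move=> P0 PU A; elim: {A}#|A| {-2}A (erefl #|A|) => [|k IH] A cardA.
  by rewrite (cards0_eq cardA).
have [x xA] : exists x, x \in A by apply/set0Pn; rewrite -card_gt0 cardA.
rewrite -(setD1K xA); apply: PU; first by rewrite !inE eqxx.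
by apply: IH; move: cardA; rewrite (cardsD1 x) xA add1n => -[].
Qed.

Lemma eq_n_comp_on (T : finType) (e1 e2 : rel T) (a : {pred T}) :
  {in a, connect e1 =2 connect e2} -> n_comp e1 a = n_comp e2 a.
Proof.
move=> eq_connect_a; apply: eq_card => x; rewrite !inE.
case ax: (x \in a); rewrite ?andbF // !andbT.
by rewrite /fingraph.root; congr (odflt _ _ == _); apply: eq_pick; apply: eq_connect_a.
Qed.

Section Graph.
Variables (V E : finType) (s t : E -> V).
Implicit Types (S : {set E}).

Definition adj_on S : rel V := fun x y =>
  [exists f in S, ((s f == x) && (t f == y)) || ((s f == y) && (t f == x))].

Definition ncomp S : nat := n_comp (adj_on S) V.

Lemma adj_on_sym S : symmetric (adj_on S).
Proof.
by move=> x y; apply/existsP/existsP => -[f /andP[fS fxy]]; exists f;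
  rewrite fS /= orbC.
Qed.

Lemma connect_on_sym S : connect_sym (adj_on S).
Proof. exact/sym_connect_sym/adj_on_sym. Qed.

Lemma adj_on_edge S f : f \in S -> adj_on S (s f) (t f).
Proof. by move=> fS; apply/existsP; exists f; rewrite fS !eqxx. Qed.

Lemma connect_on_edge S f a : f \in S ->
  connect (adj_on S) a (s f) = connect (adj_on S) a (t f).
Proof. by move/adj_on_edge/(same_connect1r (connect_on_sym S)). Qed.

Lemma connect_on_fun (T : Type) S (w : V -> T) :
  (forall f, f \in S -> w (t f) = w (s f)) ->
  forall u v, connect (adj_on S) u v -> w u = w v.
Proof.
move=> wE u v /connectP[p pp ->]; elim: p u pp => //= a p IH u /andP[ua pp].
rewrite -(IH _ pp).
by case/existsP: ua => f /andP[fS /orP[]/andP[/eqP<- /eqP<-]]; rewrite wE.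
Qed.

Lemma adj_onU1 e S x y : adj_on (e |: S) x y =
  adj_on S x y || (((s e == x) && (t e == y)) || ((s e == y) && (t e == x))).
Proof.
apply/existsP/orP => [[f /andP[]]|[/existsP[f /andP[fS fxy]]|exy]].
- by rewrite !inE => /orP[/eqP-> | fS fxy]; [right | left; apply/existsP; exists f; rewrite fS].
- by exists f; rewrite !inE fS orbT.
- by exists e; rewrite !inE eqxx.
Qed.

Section AddEdge.
Variables (e : E) (S : {set E}).
Local Notation x := (s e).
Local Notation y := (t e).
Local Notation c1 := (connect (adj_on S)).
Local Notation c2 := (connect (adj_on (e |: S))).

Lemma connect_onU1 u v :
  c2 u v = [|| c1 u v, c1 u x && c1 y v | c1 u y && c1 x v].
Proof.
have sym1 := connect_on_sym S; have sym2 := connect_on_sym (e |: S).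
apply/idP/idP.
  pose P := [pred w | [|| c1 u w, c1 u x && c1 y w | c1 u y && c1 x w]].
  have clP : closed (adj_on (e |: S)) P.
    apply: (intro_closed sym2) => a b; rewrite adj_onU1 => /orP[ab|].
      by rewrite !inE !(same_connect1r sym1 ab).
    by case/orP=> /andP[/eqP<- /eqP<-]; rewrite !inE !connect0 /= ?andbT;
      case: (c1 u x) (c1 u y) => -[]; rewrite ?orbT.
  by move/(closed_connect clP); rewrite !inE connect0 => <-.
have c2e : c2 x y by apply: connect1; rewrite adj_onU1 !eqxx orbT.
have c12 a b : c1 a b -> c2 a b.
  by apply: connect_sub => a' b' ab; apply: connect1; rewrite adj_onU1 ab.
case/or3P => [/c12 // | /andP[/c12 h1 /c12 h2] | /andP[/c12 h1 /c12 h2]].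
- exact: connect_trans h1 (connect_trans c2e h2).
- by apply: connect_trans h1 (connect_trans _ h2); rewrite sym2.
Qed.

Lemma ncompU1_connect : c1 x y -> ncomp (e |: S) = ncomp S.
Proof.
move=> cxy; apply: eq_n_comp => u v; rewrite connect_onU1.
have cyx : c1 y x by rewrite connect_on_sym.
apply/idP/idP => [|-> //].
by case/or3P => [// | /andP[h1 h2] | /andP[h1 h2]];
  [exact: connect_trans h1 (connect_trans cxy h2)
  |exact: connect_trans h1 (connect_trans cyx h2)].
Qed.

Lemma ncompU1_bridge : ~~ c1 x y -> (ncomp (e |: S)).+1 = ncomp S.
Proof.
move=> cxy; have sym1 := connect_on_sym S.
(* [A] is made of two components for [S] and of one for [e |: S]. *)
pose A := closure (adj_on S) (pred2 x y).
have inA z : (z \in A) = c1 x z || c1 y z.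
  rewrite /A /closure_mem unfold_in; apply/pred0Pn/orP => [[w]|].
    by case/andP=> /= zw /pred2P[]<-; [left | right]; rewrite sym1.
  by case=> h; [exists x | exists y]; rewrite /= !inE eqxx ?orbT sym1 h.
rewrite /ncomp (n_compC A) [RHS](n_compC A) n_comp_closure2 // cxy.
have -> : n_comp (adj_on (e |: S)) A = 1%N.
  rewrite -(n_comp_connect (connect_on_sym (e |: S)) x).
  by apply: eq_n_comp_r => z; rewrite inA !inE connect_onU1 connect0 (negbTE cxy) orbF.
rewrite add1n; apply: congr1; apply: eq_n_comp_on => z; rewrite !inE inA => /norP[xz yz] v.
by rewrite connect_onU1 (sym1 z x) (negbTE xz) (sym1 z y) (negbTE yz) /= orbF.
Qed.

End AddEdge.

Lemma ncomp0 : ncomp set0 = #|V|.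
Proof.
apply: eq_card => x; rewrite !inE andbT.
have /connectP[[|a p] /=] := connect_root (adj_on set0) x.
- by move=> _ /eqP.
- by case/andP=> /existsP[f]; rewrite inE.
Qed.

Lemma leq_card_ncomp S : (#|V| <= #|S| + ncomp S)%N.
Proof.
elim/setU1_ind: S => [|e S eS IH]; first by rewrite cards0 ncomp0.
rewrite cardsU1 eS add1n addSn; case: (boolP (connect (adj_on S) (s e) (t e))).
  by move/ncompU1_connect->; apply: leq_trans IH (leqnSn _).
by move/ncompU1_bridge => ncompS; rewrite -ncompS addnS in IH.
Qed.

Definition cycle_rank S : nat := #|S| + ncomp S - #|V|.

Lemma cycle_rankE S : (cycle_rank S + #|V| = #|S| + ncomp S)%N.
Proof. by rewrite subnK // leq_card_ncomp. Qed.

Variable M : zmodType.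
Implicit Types (z : {ffun E -> M}) (xv : {ffun V -> M}).

Definition coboundary xv : {ffun E -> M} := [ffun f => xv (t f) - xv (s f)].

Lemma coboundaryD xv xv' f :
  coboundary (xv + xv') f = coboundary xv f + coboundary xv' f.
Proof. by rewrite !ffunE opprD addrACA. Qed.

Lemma coboundaryB xv xv' f :
  coboundary (xv - xv') f = coboundary xv f - coboundary xv' f.
Proof. by rewrite !ffunE !opprB addrACA [RHS]addrACA (addrC (- xv' (t f))). Qed.

Lemma coboundary_connect S xv xv' f :
  {in S, coboundary xv =1 coboundary xv'} -> connect (adj_on S) (s f) (t f) ->
  coboundary xv f = coboundary xv' f.
Proof.
move=> eqS cst; apply/eqP; rewrite -subr_eq0 -coboundaryB ffunE.
rewrite (connect_on_fun (w := xv - xv') _ cst) ?subrr // => g gS.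
by have := coboundaryB xv xv' g; rewrite eqS // subrr ffunE => /subr0_eq.
Qed.

(* [phi] is onto and kills exactly the cochains that are coboundaries on [S]:
   it identifies H^1(S; M) with M^b.  [pot z] is a potential of [z] on [S]
   whenever one exists, chosen additively and depending on [z] only through
   its values on [S]. *)
Inductive cocycle_split S : Prop :=
  CocycleSplit b (phi : {ffun E -> M} -> {ffun 'I_b -> M})
               (pot : {ffun E -> M} -> {ffun V -> M}) of
    (b + #|V| = #|S| + ncomp S)%N
  & {morph phi : z z' / z + z'}
  & {morph pot : z z' / z + z'}
  & (forall z z', {in S, z =1 z'} -> phi z = phi z' /\ pot z = pot z')
  & (forall T, exists z, phi z = T)
  & (forall z, phi z = 0 -> {in S, z =1 coboundary (pot z)})
  & (forall z xv, {in S, z =1 coboundary xv} -> phi z = 0).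

Lemma cocycle_split0 : cocycle_split set0.
Proof.
apply: (@CocycleSplit _ 0 (fun=> 0) (fun=> 0)) => //; rewrite ?cards0 ?ncomp0 //.
- by move=> *; rewrite addr0.
- by move=> *; rewrite addr0.
- by move=> T; exists 0; apply/ffunP => -[].
- by move=> z _ f; rewrite inE.
Qed.

Section AddEdge.
Variables (e : E) (S : {set E}) (b : nat).
Variables (phi : {ffun E -> M} -> {ffun 'I_b -> M}) (pot : {ffun E -> M} -> {ffun V -> M}).
Hypotheses (eS : e \notin S) (card_b : (b + #|V| = #|S| + ncomp S)%N).
Hypotheses (phiD : {morph phi : z z' / z + z'}) (potD : {morph pot : z z' / z + z'}).
Hypothesis local : forall z z', {in S, z =1 z'} -> phi z = phi z' /\ pot z = pot z'.
Hypothesis phi_onto : forall T, exists z, phi z = T.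
Hypothesis phi0_pot : forall z, phi z = 0 -> {in S, z =1 coboundary (pot z)}.
Hypothesis coboundary_phi0 : forall z xv, {in S, z =1 coboundary xv} -> phi z = 0.

Definition defect z : M := z e - coboundary (pot z) e.

Lemma defectD : {morph defect : z z' / z + z'}.
Proof. by move=> z z'; rewrite /defect potD coboundaryD [(z + z') e]ffunE opprD addrACA. Qed.

Lemma localU1 z z' : {in e |: S, z =1 z'} ->
  [/\ phi z = phi z', pot z = pot z' & defect z = defect z'].
Proof.
move=> eqz; have [eq_phi eq_pot] : phi z = phi z' /\ pot z = pot z'.
  by apply: local => f fS; apply: eqz; rewrite !inE fS orbT.
by split=> //; rewrite /defect eq_pot (eqz e (setU11 e S)).
Qed.

Lemma cocycle_splitU1_cycle :
  connect (adj_on S) (s e) (t e) -> cocycle_split (e |: S).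
Proof.
move=> cst.
pose phi' z : {ffun 'I_b.+1 -> M} :=
  [ffun i => if unlift ord_max i is Some j then phi z j else defect z].
have phi'0 z : phi' z = 0 <-> phi z = 0 /\ defect z = 0.
  split=> [/ffunP phi0 | [phi0 d0]]; last first.
    by apply/ffunP => i; rewrite !ffunE; case: unlift => [j|]; rewrite ?phi0 ?ffunE.
  split; last by have := phi0 ord_max; rewrite !ffunE unlift_none.
  by apply/ffunP => j; have := phi0 (lift ord_max j); rewrite !ffunE liftK.
apply: (@CocycleSplit _ b.+1 phi' pot).
- by rewrite addSn card_b cardsU1 eS ncompU1_connect.
- by move=> z z'; apply/ffunP => i; rewrite !ffunE; case: unlift => [j|];
    rewrite ?phiD ?defectD ?ffunE.
- exact: potD.
- move=> z z' /localU1[eq_phi eq_pot eq_d]; split=> //.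
  by apply/ffunP => i; rewrite !ffunE eq_phi eq_d.
- move=> T; have [z phiz] := phi_onto [ffun j => T (lift ord_max j)].
  pose bump : {ffun E -> M} := [ffun f => if f == e then T ord_max - defect z else 0].
  have [phi_zb pot_zb] : phi (z + bump) = phi z /\ pot (z + bump) = pot z.
    apply: local => f fS; rewrite !ffunE; case: eqP => [fe|_]; last by rewrite addr0.
    by move: eS; rewrite -fe fS.
  exists (z + bump); apply/ffunP => i; rewrite !ffunE phi_zb.
  case: unliftP => [j ->| ->]; first by rewrite phiz ffunE.
  by rewrite {1}/defect pot_zb [(z + bump) e]ffunE [bump e]ffunE eqxx addrAC subrKC.
- move=> z /phi'0[/phi0_pot zpot d0] f; rewrite !inE => /orP[/eqP-> | /zpot //].
  exact: subr0_eq d0.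
- move=> z xv zxv.
  have zxvS : {in S, z =1 coboundary xv} by move=> f fS; apply: zxv; rewrite !inE fS orbT.
  apply/phi'0; split.
    exact: coboundary_phi0 zxvS.
  have zpot := phi0_pot (coboundary_phi0 zxvS).
  rewrite /defect (zxv e (setU11 e S)) (coboundary_connect (xv' := pot z) _ cst) ?subrr //.
  by move=> f fS; rewrite -zxvS // zpot.
Qed.

Lemma cocycle_splitU1_bridge :
  ~~ connect (adj_on S) (s e) (t e) -> cocycle_split (e |: S).
Proof.
move=> ncst; have symS := connect_on_sym S.
pose shift d : {ffun V -> M} := [ffun v => if connect (adj_on S) (t e) v then d else 0].
have shiftD d d' : shift (d + d') = shift d + shift d'.
  by apply/ffunP => v; rewrite !ffunE; case: ifP; rewrite ?addr0.
have cob_shift d f : f \in S -> coboundary (shift d) f = 0.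
  by move=> fS; rewrite !ffunE (connect_on_edge _ fS) subrr.
have cob_shift_e d : coboundary (shift d) e = d.
  by rewrite !ffunE connect0 (symS (t e)) (negbTE ncst) subr0.
apply: (@CocycleSplit _ b phi (fun z => pot z + shift (defect z))).
- by rewrite card_b cardsU1 eS -(ncompU1_bridge ncst) addnS addSn.
- exact: phiD.
- by move=> z z'; rewrite potD defectD shiftD addrACA.
- by move=> z z' /localU1[-> -> ->].
- exact: phi_onto.
- move=> z /phi0_pot zpot f; rewrite !inE => /orP[/eqP-> | fS].
    by rewrite coboundaryD cob_shift_e subrKC.
  by rewrite coboundaryD cob_shift // addr0 zpot.
- move=> z xv zxv; apply: (coboundary_phi0 (xv := xv)) => f fS.
  by apply: zxv; rewrite !inE fS orbT.
Qed.

End AddEdge.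

Lemma cocycle_splitU1 e S : e \notin S -> cocycle_split S -> cocycle_split (e |: S).
Proof.
move=> eS [b phi pot card_b phiD potD local phi_onto phi0_pot coboundary_phi0].
case: (boolP (connect (adj_on S) (s e) (t e))).
  exact: (cocycle_splitU1_cycle eS card_b phiD potD local phi_onto phi0_pot coboundary_phi0).
exact: (cocycle_splitU1_bridge eS card_b phiD potD local phi_onto phi0_pot coboundary_phi0).
Qed.

Lemma cocycle_split_all S : cocycle_split S.
Proof. by elim/setU1_ind: S => [|e S]; [apply: cocycle_split0 | apply: cocycle_splitU1]. Qed.

Lemma cocycle_quotient S :
  exists phi : {ffun E -> M} -> {ffun 'I_(cycle_rank S) -> M},
  [/\ {morph phi : z z' / z + z'}, forall T, exists z, phi z = T
    & forall z, phi z = 0 <-> exists xv, {in S, z =1 coboundary xv}].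
Proof.
case: (cocycle_split_all S) => b phi pot card_b phiD _ _ phi_onto phi0_pot cob_phi0.
have -> : cycle_rank S = b by apply/(@addIn #|V|); rewrite cycle_rankE card_b.
exists phi; split=> // z; split=> [/phi0_pot zpot | [xv /cob_phi0 //]].
by exists (pot z).
Qed.

End Graph.

Section Contraction.
Variables (R : archiRealFieldType) (n : nat) (C : curve R n) (G : zmodType).
Local Notation NG := 'rV[G]_n.
Implicit Types (beta : bool) (xv : {ffun Vf C -> NG}) (xe z : {ffun Eb C -> NG}).

Definition trivial_edges : {set Eb C} := [set e | trivslope e].
Local Notation E0 := trivial_edges.

Lemma adj0E : @adj0 R n C =2 adj_on src tgt E0.
Proof. by move=> x y; apply: eq_existsb => e; rewrite inE. Qed.

Lemma piv_const (T : Type) (w : Vf C -> T) :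
  (forall e, trivslope e -> w (tgt e) = w (src e)) -> forall v, w (val (piv v)) = w v.
Proof.
move=> wE v; symmetry; apply: (connect_on_fun (S := E0)).
  by move=> f; rewrite inE; apply: wE.
by rewrite -(eq_connect adj0E); apply: connect_root.
Qed.

Lemma hf_piv (v : Vf C) : hf (val (piv v)) = hf v.
Proof. by apply: piv_const => e /eqP. Qed.

Lemma pivK (u : Vbar C) : piv (val u) = u.
Proof. by apply: val_inj; apply/eqP; exact: (valP u). Qed.

Lemma piv_trivslope (e : Eb C) : trivslope e -> piv (src e) = piv (tgt e).
Proof.
move=> e0; apply: val_inj => /=.
apply/(fingraph.rootP (sym_connect_sym (@adj0_sym R n C))); apply: connect1.
by apply/existsP; exists e; rewrite e0 !eqxx.
Qed.

Lemma card_Vf_contract : #|Vf (contract C)| = ncomp src tgt E0.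
Proof.
rewrite card_sig; apply: eq_card => v.
by rewrite !inE andbT /roots (eq_root adj0E).
Qed.

Lemma card_Eb : #|Eb C| = (#|Eb (contract C)| + #|E0|)%N.
Proof.
rewrite card_sig cardsE -(cardC [pred e : Eb C | trivslope e]) addnC.
by congr addn; apply: eq_card => e; rewrite !inE.
Qed.

Lemma genus_contract : genus C - genus (contract C) = (cycle_rank src tgt E0)%:Z.
Proof.
have := cycle_rankE src tgt E0; rewrite -card_Vf_contract.
rewrite /genus card_Eb /=; lia.
Qed.

Lemma inNeG0 (e : Eb C) : inNeG e (0 : NG).
Proof. by exists [::]; split => //; rewrite big_nil. Qed.

Lemma inNeG_trivslope (e : Eb C) (y : NG) : trivslope e -> inNeG e y -> y = 0.
Proof.
move=> /eqP e0 [ps [inNe_ps ->]]; apply: big1_seq => p /andP[_ /inNe_ps [r kE]].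
apply/rowP => i; rewrite !mxE.
have := congr1 (fun m : 'rV[R]_n => m ord0 i) kE; rewrite e0 subrr scaler0 !mxE.
by move/eqP; rewrite intr_eq0 => /eqP->; rewrite mulr0z.
Qed.

Lemma inNeG_contract (u : Eb (contract C)) (y : NG) : inNeG u y <-> inNeG (val u) y.
Proof. by rewrite /inNeG /inNe /= !hf_piv. Qed.

Lemma lmult_contract (u : Eb (contract C)) : lmult u = lmult (val u).
Proof. by rewrite /lmult /= !hf_piv. Qed.

Lemma dmap_trivslope beta xv xe (e : Eb C) : trivslope e -> inNeG e (xe e) ->
  dmap beta xv xe e = coboundary src tgt xv e.
Proof. by move=> e0 /(inNeG_trivslope e0) xe0; rewrite !ffunE xe0 mul0rn addr0. Qed.

Lemma liftE_val (y : {ffun Eb (contract C) -> NG}) (u : Eb (contract C)) :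
  liftE y (val u) = y u.
Proof. by rewrite ffunE valK. Qed.

Lemma liftE_trivslope (y : {ffun Eb (contract C) -> NG}) (e : Eb C) :
  trivslope e -> liftE y e = 0.
Proof. by move=> e0; rewrite ffunE insubF //= e0. Qed.

Definition restrV xv : {ffun Vf (contract C) -> NG} := [ffun u => xv (val u)].
Definition restrE z : {ffun Eb (contract C) -> NG} := [ffun u => z (val u)].

Lemma liftE_restrE z (e : Eb C) : liftE (restrE z) e = if trivslope e then 0 else z e.
Proof.
case: ifPn => [/liftE_trivslope // | e1].
by rewrite -[e]/(val (Sub e e1 : Ebar C)) liftE_val ffunE.
Qed.

Lemma liftV_restrV xv :
  (forall e, trivslope e -> xv (tgt e) = xv (src e)) -> liftV (restrV xv) = xv.
Proof. by move=> xvE; apply/ffunP => v; rewrite !ffunE; apply: piv_const. Qed.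

Lemma liftE_restrE_id z : (forall e, trivslope e -> z e = 0) -> liftE (restrE z) = z.
Proof. by move=> z0; apply/ffunP => e; rewrite liftE_restrE; case: ifPn => // /z0. Qed.

Lemma liftE0 : liftE (0 : {ffun Eb (contract C) -> NG}) = 0.
Proof. by apply/ffunP => e; rewrite !ffunE; case: insub => // u; rewrite ffunE. Qed.

Lemma restrE_liftE (y : {ffun Eb (contract C) -> NG}) : restrE (liftE y) = y.
Proof. by apply/ffunP => u; rewrite ffunE liftE_val. Qed.

Lemma liftV_inj : injective (@liftV R n G C).
Proof.
move=> xv xv' /ffunP eq_lift; apply/ffunP => u.
by have := eq_lift (val u); rewrite !ffunE pivK.
Qed.

Lemma liftE_inj : injective (@liftE R n G C).
Proof. by move=> y y' eq_lift; rewrite -(restrE_liftE y) eq_lift restrE_liftE. Qed.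

Lemma inNeG_liftE (y : {ffun Eb (contract C) -> NG}) :
  (forall u, inNeG u (y u)) -> forall e, inNeG e (liftE y e).
Proof.
move=> yNe e; case: (boolP (trivslope e)) => [e0 | e1].
  by rewrite liftE_trivslope //; apply: inNeG0.
by rewrite -[e]/(val (Sub e e1 : Ebar C)) liftE_val; apply/inNeG_contract.
Qed.

Lemma inNeG_restrE xe : (forall e, inNeG e (xe e)) -> forall u, inNeG u (restrE xe u).
Proof. by move=> xeNe u; rewrite ffunE; apply/inNeG_contract. Qed.

Lemma dmap0E beta xv : dmap beta xv 0 = coboundary src tgt xv.
Proof. by apply/ffunP => e; rewrite !ffunE mul0rn addr0. Qed.

Lemma dmap_liftE beta (xv : {ffun Vf (contract C) -> NG}) y :
  dmap beta (liftV xv) (liftE y) = liftE (dmap beta xv y).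
Proof.
apply/ffunP => e; case: (boolP (trivslope e)) => [e0 | e1].
  by rewrite liftE_trivslope // ffunE liftE_trivslope // mul0rn addr0 !ffunE piv_trivslope // subrr.
by rewrite -[e]/(val (Sub e e1 : Ebar C)) liftE_val !ffunE valK lmult_contract.
Qed.

Lemma dmap_restr beta xv xe :
  (forall e, trivslope e -> xv (tgt e) = xv (src e)) ->
  dmap beta (restrV xv) (restrE xe) = restrE (dmap beta xv xe).
Proof. by move=> xvE; apply/ffunP => u; rewrite !ffunE /= lmult_contract !(piv_const xvE). Qed.

Lemma trivslope_const beta xv xe :
  (forall e, inNeG e (xe e)) -> (forall e, trivslope e -> dmap beta xv xe e = 0) ->
  forall e, trivslope e -> xv (tgt e) = xv (src e).
Proof.
move=> xeNe dmap0 e e0; apply/subr0_eq.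
by have := dmap0 e e0; rewrite (dmap_trivslope _ _ e0 (xeNe e)) ffunE.
Qed.

Lemma inE1_lift beta (xv : {ffun Vf (contract C) -> NG}) y :
  inE1 G beta xv y -> inE1 G beta (liftV xv) (liftE y).
Proof.
by case=> yNe dmap0; split; [apply: inNeG_liftE | rewrite dmap_liftE dmap0 liftE0].
Qed.

Lemma inE1_restr beta xv xe : inE1 G beta xv xe ->
  [/\ inE1 G beta (restrV xv) (restrE xe), liftV (restrV xv) = xv & liftE (restrE xe) = xe].
Proof.
case=> xeNe dmap0.
have xvE : forall e, trivslope e -> xv (tgt e) = xv (src e).
  by apply: (trivslope_const (beta := beta) xeNe) => e _; rewrite dmap0 ffunE.
split; [split | exact: liftV_restrV | ].
- exact: inNeG_restrE.
- by rewrite dmap_restr // dmap0; apply/ffunP => u; rewrite !ffunE.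
- by apply: liftE_restrE_id => e e0; apply: inNeG_trivslope e0 (xeNe e).
Qed.

Lemma inIm_liftE beta (y : {ffun Eb (contract C) -> NG}) :
  inIm G beta y -> inIm G beta (liftE y).
Proof.
case=> xv [xe [xeNe <-]]; exists (liftV xv), (liftE xe).
by split; [apply: inNeG_liftE | apply: dmap_liftE].
Qed.

Lemma inIm_liftE_inv beta (y : {ffun Eb (contract C) -> NG}) :
  inIm G beta (liftE y) -> inIm G beta y.
Proof.
case=> xv [xe [xeNe dmapE]]; exists (restrV xv), (restrE xe); split.
  exact: inNeG_restrE.
rewrite dmap_restr ?dmapE ?restrE_liftE //.
by apply: (trivslope_const (beta := beta) xeNe) => e e0; rewrite dmapE liftE_trivslope.
Qed.

Lemma inIm_sub_liftE beta z :
  (exists y, inIm G beta (z - liftE y)) <-> exists xv, {in E0, z =1 coboundary src tgt xv}.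
Proof.
split=> [[y [xv [xe [xeNe dmapE]]]] | [xv zxv]].
  exists xv => e; rewrite inE => e0.
  rewrite -(dmap_trivslope beta _ e0 (xeNe e)) dmapE.
  by rewrite [(z - _) e]ffunE [(- liftE y) e]ffunE liftE_trivslope // subr0.
exists (restrE (z - coboundary src tgt xv)), xv, 0; split=> [e | ].
  by rewrite ffunE; apply: inNeG0.
apply/ffunP => e; rewrite dmap0E [(z - _) e]ffunE [(- liftE _) e]ffunE liftE_restrE.
case: ifPn => [e0 | _]; first by rewrite subr0 zxv ?inE.
by rewrite [(z - _) e]ffunE [(- coboundary _ _ _) e]ffunE opprB subrKC.
Qed.

End Contraction.

Theorem mainTheorem9 (R : archiRealFieldType) (n : nat) (C : curve R n) (G : zmodType) :
  is_curve C ->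
  genus (contract C) <= genus C /\
  forall beta : bool,
  [/\ (forall (xv : {ffun Vf (contract C) -> 'rV[G]_n})
              (xe : {ffun Eb (contract C) -> 'rV[G]_n}),
          inE1 G beta xv xe -> inE1 G beta (liftV xv) (liftE xe)),
      (forall (xv xv' : {ffun Vf (contract C) -> 'rV[G]_n})
              (xe xe' : {ffun Eb (contract C) -> 'rV[G]_n}),
           inE1 G beta xv xe -> inE1 G beta xv' xe' ->
          liftV xv = liftV xv' -> liftE xe = liftE xe' ->
          xv = xv' /\ xe = xe'),
      (forall (xv : {ffun Vf C -> 'rV[G]_n}) (xe : {ffun Eb C -> 'rV[G]_n}),
          inE1 G beta xv xe ->
          exists (xv' : {ffun Vf (contract C) -> 'rV[G]_n})
                 (xe' : {ffun Eb (contract C) -> 'rV[G]_n}), [/\ inE1 G beta xv' xe', liftV xv' = xv & liftE xe' = xe])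
    & [/\
      (forall y : {ffun Eb (contract C) -> 'rV[G]_n},
          inIm G beta y -> inIm G beta (liftE y)),
      (forall y : {ffun Eb (contract C) -> 'rV[G]_n},
          inIm G beta (liftE y) -> inIm G beta y)
    & exists phi : {ffun Eb C -> 'rV[G]_n} ->
                   {ffun 'I_(`|genus C - genus (contract C)|%N) -> 'rV[G]_n},
        [/\ (forall a b, phi (a + b) = phi a + phi b),
            (forall t, exists z, phi z = t)
          & (forall z, phi z = 0 <->
               exists y : {ffun Eb (contract C) -> 'rV[G]_n},
                 inIm G beta (z - liftE y))]]].
Proof.
move=> _; split=> [|beta]; first by rewrite -subr_ge0 genus_contract.
split=> [||xv xe /inE1_restr [restr_E1 <- <-] |]; first exact: inE1_lift.
- by move=> xv xv' xe xe' _ _ /liftV_inj-> /liftE_inj->.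
- by exists (restrV xv), (restrE xe).
split; [exact: inIm_liftE | exact: inIm_liftE_inv |].
have [phi [phiD phi_onto phi0]] := cocycle_quotient src tgt 'rV[G]_n (trivial_edges C).
rewrite genus_contract absz_nat; exists phi; split=> // z.
by rewrite phi0 inIm_sub_liftE.
Qed.
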